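(* Let $\mathcal T$ be a triangulated category and $\mathcal T^{\le0}$, $\mathcal T^{\ge0}$ full subcategories such that, for every distinguished triangle $X'\to X\to X''\xrightarrow{+1}$, if $X'$ and $X''$ belong to $\mathcal T^{\le0}$ (resp. $\mathcal T^{\ge0}$) then so does $X$. Let $M_1\to M\to M_2\xrightarrow{+1}$ be a distinguished triangle, and suppose one of the following holds: (i) $M_1\in\mathcal T^{<0}$ and there is a distinguished triangle $M_2'\to M_2\to M_2''\xrightarrow{+1}$ with $M_2'\in\mathcal T^{<0}$, $M_2''\in\mathcal T^{\ge0}$; (ii) $M_2\in\mathcal T^{\ge0}$ and there is a distinguished triangle $M_1'\to M_1\to M_1''\xrightarrow{+1}$ with $M_1'\in\mathcal T^{<0}$, $M_1''\in\mathcal T^{\ge0}$. Then there exists a distinguished triangle $M'\to M\to M''\xrightarrow{+1}$ with $M'\in\mathcal T^{<0}$ and $M''\in\mathcal T^{\ge0}$.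
   Context: $\mathcal T^{<0}$ denotes the full subcategory $\mathcal T^{\le0}[1]=\{X[1]:X\in\mathcal T^{\le0}\}$ (closed under isomorphism). *)

From HB Require Import structures.
From mathcomp Require Import all_boot all_algebra.
Set Implicit Arguments. Unset Strict Implicit. Unset Printing Implicit Defensive.
Import GRing.Theory.
Local Open Scope ring_scope.

Record cat_ops := CatOps {
  Obj : Type;
  hom : Obj -> Obj -> zmodType;
  comp : forall X Y Z : Obj, hom Y Z -> hom X Y -> hom X Z;
  idm : forall X : Obj, hom X X
}.
Arguments comp {c X Y Z}.
Arguments idm {c}.

Section Cat.
Variable C : cat_ops.
Local Notation "g ⊚ f" := (comp g f) (at level 40, left associativity).

Definition is_iso (X Y : Obj C) (f : hom X Y) : Prop :=
  exists g : hom Y X, g ⊚ f = idm X /\ f ⊚ g = idm Y.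

Definition isomorphic (X Y : Obj C) : Prop := exists f : hom X Y, is_iso f.

Definition is_zero_obj (O : Obj C) : Prop :=
  forall X : Obj C, (forall f g : hom O X, f = g) /\ (forall f g : hom X O, f = g).

Definition is_additive : Prop :=
  [/\ (forall (X Y Z W : Obj C) (h : hom Z W) (g : hom Y Z) (f : hom X Y),
         h ⊚ (g ⊚ f) = (h ⊚ g) ⊚ f),
      (forall (X Y : Obj C) (f : hom X Y), idm Y ⊚ f = f /\ f ⊚ idm X = f),
      (forall (X Y Z : Obj C) (g1 g2 : hom Y Z) (f : hom X Y),
         (g1 + g2) ⊚ f = g1 ⊚ f + g2 ⊚ f),
      (forall (X Y Z : Obj C) (g : hom Y Z) (f1 f2 : hom X Y),
         g ⊚ (f1 + f2) = g ⊚ f1 + g ⊚ f2) &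
      (exists O : Obj C, is_zero_obj O) /\
      (forall X Y : Obj C, exists (S : Obj C) (i1 : hom X S) (i2 : hom Y S)
           (p1 : hom S X) (p2 : hom S Y),
         [/\ p1 ⊚ i1 = idm X, p2 ⊚ i2 = idm Y, p1 ⊚ i2 = 0, p2 ⊚ i1 = 0 &
             i1 ⊚ p1 + i2 ⊚ p2 = idm S])].
End Cat.

Record tri_ops (C : cat_ops) := TriOps {
  shO : Obj C -> Obj C;
  shM : forall X Y : Obj C, hom X Y -> hom (shO X) (shO Y);
  dist : forall X Y Z : Obj C, hom X Y -> hom Y Z -> hom Z (shO X) -> Prop
}.
Arguments shO {C t}.
Arguments shM {C t X Y}.
Arguments dist {C t X Y Z}.

Section Tri.
Variables (C : cat_ops) (T : tri_ops C).
Local Notation "g ⊚ f" := (comp g f) (at level 40, left associativity).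
Local Notation "X [1]" := (@shO C T X) (at level 2, format "X [1]").
Local Notation sh := (@shM C T _ _).
Local Notation dist := (@dist C T _ _ _).

Definition shift_ok : Prop :=
  [/\ (forall X : Obj C, sh (idm X) = idm (X[1])),
      (forall (X Y Z : Obj C) (g : hom Y Z) (f : hom X Y), sh (g ⊚ f) = sh g ⊚ sh f),
      (forall (X Y : Obj C) (f g : hom X Y), sh (f + g) = sh f + sh g),
      (forall (X Y : Obj C), bijective (@shM C T X Y)) &
      (forall Y : Obj C, exists X : Obj C, isomorphic (X[1]) Y)].

Definition TR1 : Prop :=
  [/\ (forall (X Y Z X' Y' Z' : Obj C) (f : hom X Y) (g : hom Y Z) (h : hom Z (X[1]))
         (f' : hom X' Y') (g' : hom Y' Z') (h' : hom Z' (X'[1]))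
         (a : hom X X') (b : hom Y Y') (c : hom Z Z'),
         dist f g h -> is_iso a -> is_iso b -> is_iso c ->
         f' ⊚ a = b ⊚ f -> g' ⊚ b = c ⊚ g -> h' ⊚ c = sh a ⊚ h ->
         dist f' g' h'),
      (forall (X O : Obj C), is_zero_obj O ->
         dist (idm X) (0 : hom X O) (0 : hom O (X[1]))) &
      (forall (X Y : Obj C) (f : hom X Y),
         exists (Z : Obj C) (g : hom Y Z) (h : hom Z (X[1])), dist f g h)].

Definition TR2 : Prop :=
  forall (X Y Z : Obj C) (f : hom X Y) (g : hom Y Z) (h : hom Z (X[1])),
    dist f g h <-> dist g h (- sh f).

Definition TR3 : Prop :=
  forall (X Y Z X' Y' Z' : Obj C) (f : hom X Y) (g : hom Y Z) (h : hom Z (X[1]))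
         (f' : hom X' Y') (g' : hom Y' Z') (h' : hom Z' (X'[1]))
         (a : hom X X') (b : hom Y Y'),
    dist f g h -> dist f' g' h' -> f' ⊚ a = b ⊚ f ->
    exists c : hom Z Z', g' ⊚ b = c ⊚ g /\ h' ⊚ c = sh a ⊚ h.

(** TR4 (octahedral axiom, as in the Stacks project, Tag 05QK) *)
Definition TR4 : Prop :=
  forall (X Y Z Q1 Q2 Q3 : Obj C) (f : hom X Y) (g : hom Y Z)
         (p1 : hom Y Q1) (d1 : hom Q1 (X[1]))
         (p2 : hom Z Q2) (d2 : hom Q2 (X[1]))
         (p3 : hom Z Q3) (d3 : hom Q3 (Y[1])),
    dist f p1 d1 -> dist (g ⊚ f) p2 d2 -> dist g p3 d3 ->
    exists (a : hom Q1 Q2) (b : hom Q2 Q3),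
      [/\ dist a b (sh p1 ⊚ d3), a ⊚ p1 = p2 ⊚ g, d2 ⊚ a = d1,
          b ⊚ p2 = p3 & d3 ⊚ b = sh f ⊚ d2].

Definition is_triangulated : Prop :=
  [/\ is_additive C, shift_ok, TR1, TR2 & TR3 /\ TR4].

Definition ext_closed (P : Obj C -> Prop) : Prop :=
  forall (X' X X'' : Obj C) (u : hom X' X) (v : hom X X'') (w : hom X'' (X'[1])),
    dist u v w -> P X' -> P X'' -> P X.

(** T^{<0} := T^{<=0}[1], closed under isomorphism. *)
Definition shifted_lt0 (Le : Obj C -> Prop) (X : Obj C) : Prop :=
  exists Y : Obj C, Le Y /\ isomorphic X (Y[1]).
End Tri.

(* Case (ii) is one octahedron: the cone Q of the composite M1' -> M1 -> M sits
   in a triangle M1'' -> Q -> M2, so Q is in T^{>=0} and M1' -> M -> Q works.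
   Case (i) is the dual octahedron for M -> M2 -> M2'': the cone Q of the
   composite sits in a triangle M1[1] -> Q -> M2'[1]. Writing Q = M'[1] and
   unshifting, M' is an extension of M2' by M1, hence lies in T^{<0} (which is
   extension-closed because T^{<=0} is), and rotating M -> M2'' -> M'[1] gives
   M' -> M -> M2''. *)
From Pilot Require Import Defs.
From mathcomp Require Import ssreflect ssrfun ssrbool eqtype ssralg.
Import GRing.Theory.
Local Open Scope ring_scope.
Set Implicit Arguments. Unset Strict Implicit.

Lemma morph_oppr (U V : zmodType) (phi : U -> V) :
  {morph phi : x y / x + y} -> {morph phi : x / - x}.
Proof.
move=> phiD x.
have phi0 : phi 0 = 0 by apply: (addrI (phi 0)); rewrite -phiD !addr0.
by apply: (addrI (phi x)); rewrite -phiD !subrr.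
Qed.

Section Triangulated.
Variables (C : cat_ops) (T : tri_ops C).
Hypothesis HT : is_triangulated T.

Local Notation "g ⊚ f" := (Defs.comp g f) (at level 40, left associativity).
Local Notation "X [1]" := (@shO C T X) (at level 2, format "X [1]").
Local Notation sh := (@shM C T _ _).
Local Notation dist := (@dist C T _ _ _).

Lemma compA (X Y Z W : Obj C) (h : hom Z W) (g : hom Y Z) (f : hom X Y) :
  h ⊚ (g ⊚ f) = h ⊚ g ⊚ f.
Proof. by case: HT => [[]]. Qed.

Lemma comp1l (X Y : Obj C) (f : hom X Y) : idm Y ⊚ f = f.
Proof. by case: HT => [[_ H]] _ _ _ _; case: (H _ _ f). Qed.

Lemma comp1r (X Y : Obj C) (f : hom X Y) : f ⊚ idm X = f.
Proof. by case: HT => [[_ H]] _ _ _ _; case: (H _ _ f). Qed.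

Lemma compNl (X Y Z : Obj C) (g : hom Y Z) (f : hom X Y) : (- g) ⊚ f = - (g ⊚ f).
Proof.
case: HT => [[_ _ compDl _ _]] _ _ _ _.
by apply: (@morph_oppr _ _ (fun k : hom Y Z => k ⊚ f)) => k l; apply: compDl.
Qed.

Lemma compNr (X Y Z : Obj C) (g : hom Y Z) (f : hom X Y) : g ⊚ (- f) = - (g ⊚ f).
Proof.
case: HT => [[_ _ _ compDr _]] _ _ _ _.
by apply: (@morph_oppr _ _ (fun k : hom X Y => g ⊚ k)) => k l; apply: compDr.
Qed.

Lemma sh1 (X : Obj C) : sh (idm X) = idm X[1].
Proof. by case: HT => _ []. Qed.

Lemma shM_surj (X Y : Obj C) (k : hom X[1] Y[1]) : exists f : hom X Y, sh f = k.
Proof. by case: HT => _ [_ _ _ /(_ X Y) [g _ gK] _] _ _ _; exists (g k). Qed.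

Lemma distS (X Y Z : Obj C) (f : hom X Y) (g : hom Y Z) (h : hom Z X[1]) :
  dist f g h <-> dist g h (- sh f).
Proof. by case: HT => _ _ _ /(_ X Y Z f g h). Qed.

Lemma is_iso1 (X : Obj C) : is_iso (idm X).
Proof. by exists (idm X); rewrite comp1l. Qed.

Lemma isomorphic_refl (X : Obj C) : isomorphic X X.
Proof. by exists (idm X); apply: is_iso1. Qed.

Lemma isomorphic_sym (X Y : Obj C) : isomorphic X Y -> isomorphic Y X.
Proof. by case=> f [g [gf fg]]; exists g, f. Qed.

Lemma shO_surj (Y : Obj C) : exists X : Obj C, isomorphic Y X[1].
Proof.
case: HT => _ [_ _ _ _ /(_ Y) [X XY]] _ _ _.
by exists X; apply: isomorphic_sym.
Qed.

Definition has_triangle (X Y Z : Obj C) : Prop :=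
  exists (f : hom X Y) (g : hom Y Z) (h : hom Z X[1]), dist f g h.

Lemma distNN (X Y Z : Obj C) (f : hom X Y) (g : hom Y Z) (h : hom Z X[1]) :
  dist f g h -> dist (- f) (- g) h.
Proof.
case: HT => _ _ [TR1_iso _ _] _ _ fgh.
have isoN1 : is_iso (- idm Y) by exists (- idm Y); rewrite compNl compNr opprK comp1l.
apply: (TR1_iso _ _ _ _ _ _ _ _ _ _ _ _ _ _ _ fgh (is_iso1 X) isoN1 (is_iso1 Z)).
- by rewrite comp1r compNl comp1l.
- by rewrite compNr compNl !opprK comp1l comp1r.
- by rewrite sh1 comp1l comp1r.
Qed.

Lemma has_triangle_iso (X Y Z X' Y' Z' : Obj C) :
  isomorphic X X' -> isomorphic Y Y' -> isomorphic Z Z' ->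
  has_triangle X Y Z -> has_triangle X' Y' Z'.
Proof.
case: HT => _ _ [TR1_iso _ _] _ _.
move=> [a [a' [a'a aa']]] [b [b' [b'b bb']]] [c [c' [c'c cc']]] [f [g [h fgh]]].
exists (b ⊚ f ⊚ a'), (c ⊚ g ⊚ b'), (sh a ⊚ h ⊚ c').
apply: (TR1_iso _ _ _ _ _ _ _ _ _ _ _ _ a b c fgh);
  [by exists a' | by exists b' | by exists c' | ..];
  by rewrite -!compA ?a'a ?b'b ?c'c comp1r.
Qed.

Lemma has_triangle_unshift (X Y Z : Obj C) :
  has_triangle X[1] Y[1] Z[1] -> has_triangle X Y Z.
Proof.
move=> [u [v [w uvw]]].
have [f fE] := shM_surj u; have [g gE] := shM_surj v; have [h hE] := shM_surj (- w).
(* Three rotations turn (f, g, h) into (- sh f, - sh g, - sh h). *)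
exists f, g, h; apply/distS/distS/distS.
by rewrite fE gE hE opprK; apply: distNN.
Qed.

Lemma dist_unrotate (X Y Z : Obj C) (g : hom Y Z) (h : hom Z X[1]) (k : hom X[1] Y[1]) :
  dist g h k -> exists f : hom X Y, dist f g h.
Proof.
have [f fE] := shM_surj (- k).
by exists f; apply/distS; rewrite fE opprK.
Qed.

Variables (Le Ge : Obj C -> Prop).
Hypotheses (HLe : ext_closed T Le) (HGe : ext_closed T Ge).

Lemma ext_closed_shifted_lt0 : ext_closed T (shifted_lt0 T Le).
Proof.
move=> X' X X'' u v w uvw [A [LeA X'A]] [B [LeB X''B]].
have [E XE] := shO_surj X.
have [f [g [h fgh]]] : has_triangle A E B.
  by apply/has_triangle_unshift/(has_triangle_iso X'A XE X''B); exists u, v, w.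
by exists E; split; first exact: (HLe fgh LeA LeB).
Qed.

Definition has_truncation (M : Obj C) : Prop :=
  exists (M' M'' : Obj C) (a : hom M' M) (b : hom M M'') (c : hom M'' M'[1]),
    dist a b c /\ shifted_lt0 T Le M' /\ Ge M''.

Section Extension.
Variables (M1 M M2 : Obj C) (f : hom M1 M) (g : hom M M2) (h : hom M2 M1[1]).
Hypothesis fgh : dist f g h.

Lemma has_truncation_ext_lt0 : shifted_lt0 T Le M1 -> has_truncation M2 -> has_truncation M.
Proof.
case: HT => _ _ [_ _ TR1_cone] _ [_ TR4].
move=> ltM1 [M2' [M2'' [a [b [c [abc [ltM2' geM2'']]]]]]].
have [Q [p [d cone_bg]]] := TR1_cone _ _ (b ⊚ g).
have [x [y [oct _ _ _ _]]] := TR4 _ _ _ _ _ _ _ _ _ _ _ _ _ _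
  (proj1 (distS _ _ _) fgh) cone_bg (proj1 (distS _ _ _) abc).
have ext_Q : has_triangle M1[1] Q M2'[1] by exists x, y, (sh h ⊚ - sh a).
have [M' QM'] := shO_surj Q.
have [u [v [w uvw]]] : has_triangle M1 M' M2'.
  by apply/has_triangle_unshift/(has_triangle_iso _ QM' _ ext_Q); apply: isomorphic_refl.
have [p' [d' [e cone']]] : has_triangle M M2'' M'[1].
  by apply: (has_triangle_iso _ _ QM'); [apply: isomorphic_refl.. | exists (b ⊚ g), p, d].
have [e' tri_M] := dist_unrotate cone'.
exists M', M2'', e', p', d'; split=> //; split=> //.
exact: (ext_closed_shifted_lt0 uvw ltM1 ltM2').
Qed.

Lemma has_truncation_ext_ge0 : Ge M2 -> has_truncation M1 -> has_truncation M.
Proof.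
case: HT => _ _ [_ _ TR1_cone] _ [_ TR4].
move=> geM2 [M1' [M1'' [a [b [c [abc [ltM1' geM1'']]]]]]].
have [Q [p [d cone_fa]]] := TR1_cone _ _ (f ⊚ a).
have [x [y [oct _ _ _ _]]] := TR4 _ _ _ _ _ _ _ _ _ _ _ _ _ _ abc cone_fa fgh.
by exists M1', Q, (f ⊚ a), p, d; split=> //; split=> //; apply: (HGe oct geM1'' geM2).
Qed.

End Extension.
End Triangulated.

Theorem lemma2p1 (C : cat_ops) (T : tri_ops C) (HT : is_triangulated T)
  (Le Ge : Obj C -> Prop) (HLe : ext_closed T Le) (HGe : ext_closed T Ge)
  (M1 M M2 : Obj C) (f : hom M1 M) (g : hom M M2) (h : hom M2 (shO M1))
  (Hdist : dist (t := T) f g h) :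
  ( (shifted_lt0 T Le M1 /\
      exists (M2' M2'' : Obj C) (a : hom M2' M2) (b : hom M2 M2'')
             (c : hom M2'' (shO M2')),
        dist (t := T) a b c /\ shifted_lt0 T Le M2' /\ Ge M2'')
    \/
    (Ge M2 /\
      exists (M1' M1'' : Obj C) (a : hom M1' M1) (b : hom M1 M1'')
             (c : hom M1'' (shO M1')),
        dist (t := T) a b c /\ shifted_lt0 T Le M1' /\ Ge M1'') ) ->
  exists (M' M'' : Obj C) (a : hom M' M) (b : hom M M'') (c : hom M'' (shO M')),
    dist (t := T) a b c /\ shifted_lt0 T Le M' /\ Ge M''.
Proof.
case=> [[ltM1 truncM2] | [geM2 truncM1]].
- exact: (has_truncation_ext_lt0 HT HLe Hdist ltM1 truncM2).
- exact: (has_truncation_ext_ge0 HT HGe Hdist geM2 truncM1).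
Qed.
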